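(* Consider the linear program $\min\{c^\top x + d^\top y : Tx + Qy = h,\ x \in X,\ y \in Y\}$ and its epigraphical reformulation with feasible region $\mathcal{F} = \{(x,\theta) : x \in X,\ (h - Tx, \theta) \in \mathrm{epi}(f_Y)\}$. Let $\rho \in \mathbb{R}^n$ and $\rho_0 \ge 0$, and assume $\sigma_{\mathcal{F}}(\rho,\rho_0)$ is finite. Then the problem $$\max_{\alpha \in \mathbb{R}^p}\Big\{-\alpha^\top h + \sigma_X(\rho + T^\top \alpha) + \sigma_Y(Q^\top\alpha + \rho_0 d)\Big\}$$ has an optimal solution and its optimal value equals $\sigma_{\mathcal{F}}(\rho,\rho_0)$. Moreover, if $\hat\alpha$ is any optimal solution, then every $(x,\theta)$ with $x \in X$ that satisfies the Benders' cut $\hat\alpha^\top(h - Tx) + \rho_0 \theta \ge \sigma_{\mathrm{epi}(f_Y)}(\hat\alpha, \rho_0)$ also satisfies $\rho^\top x + \rho_0\theta \ge \sigma_{\mathcal{F}}(\rho,\rho_0)$.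
   Context: $X \subseteq \mathbb{R}^n$ and $Y \subseteq \mathbb{R}^m$ are nonempty polyhedra with rational data, $Y$ pointed; $T \in \mathbb{R}^{p\times n}$, $Q \in \mathbb{R}^{p \times m}$, $h \in \mathbb{R}^p$, $c \in \mathbb{R}^n$, $d \in \mathbb{R}^m$. For $\mathcal{X} \subseteq \mathbb{R}^t$, the support is $\sigma_{\mathcal{X}}(\alpha) := \inf_{x \in \mathcal{X}} \alpha^\top x$ (so $+\infty$ if $\mathcal{X}=\emptyset$), and for sets of pairs we write $\sigma_{\mathcal{X}}(\alpha,\gamma)$ for $\inf_{(x,y)\in\mathcal{X}}\{\alpha^\top x + \gamma^\top y\}$. For $\mathcal{Y} \subseteq \mathbb{R}^m$, $f_{\mathcal{Y}}(w) := \inf_{y \in \mathcal{Y}}\{d^\top y : Qy = w\}$ and $\mathrm{epi}(f_{\mathcal{Y}}) := \{(w,\theta) \in \mathbb{R}^p\times\mathbb{R} : \theta \ge f_{\mathcal{Y}}(w)\}$. A Benders' cut is an inequality $\alpha^\top w + \alpha_0\theta \ge \beta$ valid for $\mathrm{epi}(f_Y)$, applied with $w = h - Tx$. *)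

From HB Require Import structures.
From mathcomp Require Import all_boot all_order all_algebra.
From mathcomp Require Import all_classical all_reals all_analysis.
Set Implicit Arguments. Unset Strict Implicit. Unset Printing Implicit Defensive.
Import Order.TTheory GRing.Theory Num.Theory.
Local Open Scope classical_set_scope.
Local Open Scope ring_scope.

Section Defs.
Variable R : realType.

Definition dotv (k : nat) (u v : 'cV[R]_k) : R := \sum_(i < k) u i 0 * v i 0.

Definition polyhedron (k n : nat) (A : 'M[rat]_(k, n)) (b : 'cV[rat]_k)
  : set 'cV[R]_n :=
  [set x | forall i : 'I_k, (map_mx (@ratr R) A *m x) i 0 <= ratr (b i 0)].

Definition pointed (n : nat) (S : set 'cV[R]_n) : Prop :=
  forall (y v : 'cV[R]_n), (forall t : R, S (y + t *: v)) -> v = 0.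

(* support function sigma_S(a) = inf_{x in S} a^T x  (+oo if S empty) *)
Definition supp (n : nat) (S : set 'cV[R]_n) (a : 'cV[R]_n) : \bar R :=
  ereal_inf [set (dotv a x)%:E | x in S].

Definition supp2 (n : nat) (S : set ('cV[R]_n * R)) (a : 'cV[R]_n) (a0 : R)
  : \bar R :=
  ereal_inf [set (dotv a z.1 + a0 * z.2)%:E | z in S].

Definition fval (m p : nat) (Y : set 'cV[R]_m) (Q : 'M[R]_(p, m))
  (d : 'cV[R]_m) (w : 'cV[R]_p) : \bar R :=
  ereal_inf [set (dotv d y)%:E | y in [set y | Y y /\ Q *m y = w]].

Definition epi (m p : nat) (Y : set 'cV[R]_m) (Q : 'M[R]_(p, m))
  (d : 'cV[R]_m) : set ('cV[R]_p * R) :=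
  [set z | (fval Y Q d z.1 <= z.2%:E)%E].

Definition feasF (n m p : nat) (X : set 'cV[R]_n) (Y : set 'cV[R]_m)
  (T : 'M[R]_(p, n)) (Q : 'M[R]_(p, m)) (h : 'cV[R]_p) (d : 'cV[R]_m)
  : set ('cV[R]_n * R) :=
  [set z | X z.1 /\ epi Y Q d (h - T *m z.1, z.2)].

Definition dualobj (n m p : nat) (X : set 'cV[R]_n) (Y : set 'cV[R]_m)
  (T : 'M[R]_(p, n)) (Q : 'M[R]_(p, m)) (h : 'cV[R]_p) (d : 'cV[R]_m)
  (rho : 'cV[R]_n) (rho0 : R) (a : 'cV[R]_p) : \bar R :=
  ((- dotv a h)%:E + supp X (rho + T^T *m a) + supp Y (Q^T *m a + rho0 *: d))%E.

End Defs.

(* Weak duality and the validity of the Benders cut only use that, for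
   rho0 >= 0, sigma_Y(Q^T a + rho0 d) bounds sigma_epi(f_Y)(a, rho0) from
   below.  For strong duality, sigma_F(rho, rho0) = v means that
   rho^T x + rho0 d^T y >= v on the polyhedron {x in X, y in Y, Tx + Qy = h};
   by the affine Farkas lemma this inequality is a nonnegative combination of
   the defining constraints, and the multipliers of the equations Tx + Qy = h
   give a dual point a of value at least v.  The Farkas lemma is proved by
   homogenization and Fourier-Motzkin elimination. *)

From HB Require Import structures.
From mathcomp Require Import all_boot all_order all_algebra.
From mathcomp Require Import all_classical all_reals all_analysis.
From mathcomp Require Import ring lra.
Set Implicit Arguments. Unset Strict Implicit. Unset Printing Implicit Defensive.
Import Order.TTheory GRing.Theory Num.Theory.
Local Open Scope ring_scope.

Section Dotv.
Variable R : realType.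
Implicit Types k l : nat.

Lemma dotvE k (u w : 'cV[R]_k) : dotv u w = (u^T *m w) 0 0.
Proof. by rewrite mxE; apply: eq_bigr => i _; rewrite mxE. Qed.

Lemma dotv_mulmx k l (u : 'cV[R]_k) (A : 'M[R]_(k, l)) w :
  dotv u (A *m w) = dotv (A^T *m u) w.
Proof. by rewrite !dotvE trmx_mul trmxK mulmxA. Qed.

Lemma dotvDl k (u v w : 'cV[R]_k) : dotv (u + v) w = dotv u w + dotv v w.
Proof. by rewrite !dotvE linearD /= mulmxDl mxE. Qed.

Lemma dotvDr k (u v w : 'cV[R]_k) : dotv w (u + v) = dotv w u + dotv w v.
Proof. by rewrite !dotvE mulmxDr mxE. Qed.

Lemma dotvNl k (u w : 'cV[R]_k) : dotv (- u) w = - dotv u w.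
Proof. by rewrite !dotvE linearN /= mulNmx mxE. Qed.

Lemma dotvNr k (u w : 'cV[R]_k) : dotv w (- u) = - dotv w u.
Proof. by rewrite !dotvE mulmxN mxE. Qed.

Lemma dotvZl k a (u w : 'cV[R]_k) : dotv (a *: u) w = a * dotv u w.
Proof. by rewrite !dotvE linearZ /= -scalemxAl mxE. Qed.

Lemma dotvZr k a (u w : 'cV[R]_k) : dotv w (a *: u) = a * dotv w u.
Proof. by rewrite !dotvE -scalemxAr mxE. Qed.

Lemma dotv0l k (w : 'cV[R]_k) : dotv 0 w = 0.
Proof. by rewrite dotvE trmx0 mul0mx mxE. Qed.

Lemma dotv_col_mx k l (u1 w1 : 'cV[R]_k) (u2 w2 : 'cV[R]_l) :
  dotv (col_mx u1 u2) (col_mx w1 w2) = dotv u1 w1 + dotv u2 w2.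
Proof.
rewrite /dotv big_split_ord.
by congr (_ + _); apply: eq_bigr => i _; rewrite ?col_mxEu ?col_mxEd.
Qed.

Lemma dotv_row k l (A : 'M[R]_(k, l)) i w : dotv (row i A)^T w = (A *m w) i 0.
Proof. by rewrite mxE; apply: eq_bigr => j _; rewrite !mxE. Qed.

Lemma dotv_delta k i (w : 'cV[R]_k) : dotv (delta_mx i 0) w = w i 0.
Proof.
rewrite /dotv (bigD1 i) //= big1 ?addr0 => [|j /negPf ji].
  by rewrite mxE eqxx mul1r.
by rewrite mxE ji mul0r.
Qed.

End Dotv.

Lemma exists_between (R : realDomainType) (L U : seq R) :
  {in L & U, forall l u, l <= u} ->
  exists t, {in L, forall l, l <= t} /\ {in U, forall u, t <= u}.
Proof.
elim: L => [|l L IH] LU.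
  elim: U {LU} => [|u U [t [_ tU]]]; first by exists 0.
  exists (Num.min u t); split => // w; rewrite inE => /predU1P[->|/tU wU].
    by rewrite ge_min lexx.
  by rewrite ge_min wU orbT.
have [l' u' l'L u'U|t [Lt tU]] := IH; first by apply: LU; rewrite // inE l'L orbT.
exists (Num.max l t); split => [w|u uU].
  by rewrite inE => /predU1P[->|/Lt wt]; rewrite le_max ?lexx // wt orbT.
by rewrite ge_max tU // andbT LU ?mem_head.
Qed.

Section LinearInequalities.
Variable R : realType.

Definition lineq N := ('cV[R]_N * R)%type.

Definition solves N (s : seq (lineq N)) (z : 'cV[R]_N) :=
  all (fun c : lineq N => c.2 <= dotv c.1 z) s.

Inductive implied N (s : seq (lineq N)) : 'cV[R]_N -> R -> Prop :=
| implied_mem a b : (a, b) \in s -> implied s a b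
| implied0 b : b <= 0 -> implied s 0 b
| impliedD a1 b1 a2 b2 :
    implied s a1 b1 -> implied s a2 b2 -> implied s (a1 + a2) (b1 + b2)
| impliedZ l a b : 0 <= l -> implied s a b -> implied s (l *: a) (l * b)
| implied_weaken a b b' : b' <= b -> implied s a b -> implied s a b'.

Definition vcons N (t : R) (z : 'cV[R]_N) : 'cV[R]_(1 + N) := col_mx (const_mx t) z.
Definition vhead N (a : 'cV[R]_(1 + N)) : R := usubmx a 0 0.

Lemma vhead_vcons N t (z : 'cV[R]_N) : vhead (vcons t z) = t.
Proof. by rewrite /vhead col_mxKu mxE. Qed.

Lemma vconsK N (a : 'cV[R]_(1 + N)) : vcons (vhead a) (dsubmx a) = a.
Proof.
rewrite -[RHS]vsubmxK; congr col_mx.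
by apply/matrixP => i j; rewrite !ord1 mxE.
Qed.

Lemma vheadD N (a b : 'cV[R]_(1 + N)) : vhead (a + b) = vhead a + vhead b.
Proof. by rewrite /vhead !mxE. Qed.

Lemma vheadZ N l (a : 'cV[R]_(1 + N)) : vhead (l *: a) = l * vhead a.
Proof. by rewrite /vhead !mxE. Qed.

Lemma dsubmx_vcons N t (z : 'cV[R]_N) : dsubmx (vcons t z) = z.
Proof. exact: col_mxKd. Qed.

Lemma vcons0 N : vcons 0 (0 : 'cV[R]_N) = 0.
Proof. by rewrite -[RHS]vconsK linear0 /vhead !mxE. Qed.

Lemma vconsD N s t (a z : 'cV[R]_N) : vcons s a + vcons t z = vcons (s + t) (a + z).
Proof. by rewrite -[LHS]vconsK vheadD linearD /= !vhead_vcons !dsubmx_vcons. Qed.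

Lemma vconsZ N l t (z : 'cV[R]_N) : l *: vcons t z = vcons (l * t) (l *: z).
Proof. by rewrite -[LHS]vconsK vheadZ linearZ /= vhead_vcons dsubmx_vcons. Qed.

Lemma dotv_vcons N s t (a z : 'cV[R]_N) :
  dotv (vcons s a) (vcons t z) = s * t + dotv a z.
Proof. by rewrite dotv_col_mx /dotv big_ord1 !mxE. Qed.

Lemma dotv_vconsr N (a : 'cV[R]_(1 + N)) t z :
  dotv a (vcons t z) = vhead a * t + dotv (dsubmx a) z.
Proof. by rewrite -{1}(vconsK a) dotv_vcons. Qed.

(* Fourier-Motzkin elimination of the first variable: keep the constraints
   not involving it and add all positive combinations cancelling it. *)
Definition fm_comb N (p q : lineq (1 + N)) : lineq N :=
  (vhead p.1 *: dsubmx q.1 - vhead q.1 *: dsubmx p.1, vhead p.1 * q.2 - vhead q.1 * p.2).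

Definition fm_elim N (s : seq (lineq (1 + N))) : seq (lineq N) :=
  [seq (dsubmx c.1, c.2) | c <- s & vhead c.1 == 0] ++
  [seq fm_comb p q | p <- [seq c <- s | 0 < vhead c.1],
                     q <- [seq c <- s | vhead c.1 < 0]].

Lemma fm_elim_solves N (s : seq (lineq (1 + N))) z :
  solves (fm_elim s) z -> exists t, solves s (vcons t z).
Proof.
move=> /allP sol; pose bnd (c : lineq (1 + N)) := (c.2 - dotv (dsubmx c.1) z) / vhead c.1.
have [|t [Lt tU]] := @exists_between R [seq bnd c | c <- s & 0 < vhead c.1]
                                        [seq bnd c | c <- s & vhead c.1 < 0].
  move=> l u /mapP[p /[!mem_filter]/andP[p0 ps] ->].
  move=> /mapP[q /[!mem_filter]/andP[q0 qs] ->].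
  have /sol : fm_comb p q \in fm_elim s.
    rewrite mem_cat; apply/orP; right; apply/allpairsP.
    by exists (p, q); rewrite !mem_filter p0 q0 ps qs.
  rewrite /fm_comb /= dotvDl dotvNl !dotvZl => pq.
  rewrite /bnd ler_pdivrMr // mulrAC ler_ndivlMr //; lra.
exists t; apply/allP => c cs; rewrite dotv_vconsr.
have [c0|c0|/eqP c0] := ltgtP (vhead c.1) 0.
- have : t <= bnd c by apply: tU; apply: map_f; rewrite mem_filter c0.
  by rewrite /bnd ler_ndivlMr //; lra.
- have : bnd c <= t by apply: Lt; apply: map_f; rewrite mem_filter c0.
  by rewrite /bnd ler_pdivrMr //; lra.
- have /sol : (dsubmx c.1, c.2) \in fm_elim s.
    by rewrite mem_cat (map_f (fun c => (dsubmx c.1, c.2))) // mem_filter c0.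
  by rewrite (eqP c0) mul0r add0r.
Qed.

Lemma implied_fm_elim N (s : seq (lineq (1 + N))) a b :
  implied (fm_elim s) a b -> implied s (vcons 0 a) b.
Proof.
elim=> {a b} [a b | b b0 | a1 b1 a2 b2 _ IH1 _ IH2 | l a b l0 _ IH | a b b' b'b _ IH].
- rewrite -[a]/((a, b).1) -[b]/((a, b).2) mem_cat.
  case/orP=> [/mapP[c /[!mem_filter]/andP[/eqP c0 cs] ->] |
              /allpairsP[[p q] [/[!mem_filter]/andP[p0 ps] /andP[q0 qs] ->]]].
    by apply: implied_mem; rewrite -c0 vconsK -surjective_pairing.
  have -> : vcons 0 (fm_comb p q).1 = (- vhead q.1) *: p.1 + vhead p.1 *: q.1.
    rewrite -[RHS]vconsK vheadD !vheadZ linearD !linearZ /=; congr vcons; first by ring.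
    by rewrite addrC scaleNr.
  have -> : (fm_comb p q).2 = - vhead q.1 * p.2 + vhead p.1 * q.2 by rewrite /=; ring.
  apply: impliedD; apply: impliedZ; rewrite ?oppr_ge0 ?ltW //;
    by apply: implied_mem; rewrite -surjective_pairing.
- by rewrite vcons0; apply: implied0.
- by have := impliedD IH1 IH2; rewrite vconsD addr0.
- by have := impliedZ l0 IH; rewrite vconsZ mulr0.
- exact: implied_weaken IH.
Qed.

Lemma farkas_infeasible N (s : seq (lineq N)) :
  ~ (exists z, solves s z) -> exists2 b, 0 < b & implied s 0 b.
Proof.
elim: N s => [|N IH] s infeas.
  have /allPn[c cs] : ~~ solves s 0 by apply/negP => s0; apply: infeas; exists 0.
  rewrite -ltNge [c.1]flatmx0 dotv0l => c_gt0.
  by exists c.2 => //; apply: implied_mem; rewrite -[0](flatmx0 c.1) -surjective_pairing.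
have [|b b_gt0 elim_b] := IH (fm_elim s).
  by move=> [z /fm_elim_solves [t zt]]; apply: infeas; exists (vcons t z).
by exists b => //; rewrite -vcons0; apply: implied_fm_elim.
Qed.

(* Homogenization: given a solution of [s], the implication
   [solves s z -> b <= a^T z] fails iff some [(tau, z)] with [tau >= 0] has
   [c.2 tau <= c.1^T z] for all [c] in [s] and [a^T z < b tau]; by scaling,
   the last condition may be taken to be [1 <= b tau - a^T z]. *)
Definition homog N (s : seq (lineq N)) a b : seq (lineq (1 + N)) :=
  (vcons 1 0, 0) :: (vcons b (- a), 1) :: [seq (vcons (- c.2) c.1, 0) | c <- s].

Lemma homog_infeasible N (s : seq (lineq N)) a b :
  (exists z, solves s z) -> (forall z, solves s z -> b <= dotv a z) ->
  ~ exists w, solves (homog s a b) w.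
Proof.
move=> [z0 /allP z0s] sb [w]; rewrite -(vconsK w).
set tau := vhead w; set z := dsubmx w.
rewrite /solves /= all_map !dotv_vcons dotv0l dotvNl mul1r addr0.
move=> /and3P[tau_ge0 cut /allP cone].
have {}cone c : c \in s -> c.2 * tau <= dotv c.1 z.
  by move=> /cone /=; rewrite dotv_vcons; lra.
have [tau0|tau_gt0] := eqVneq tau 0.
  (* [z] is a recession direction of [s] along which [a^T] decreases. *)
  pose l := `|dotv a z0 - b| + 1.
  have l_gt0 : 0 < l by rewrite ltr_pwDr ?normr_ge0.
  have l_big : dotv a z0 - b < l by rewrite /l; have := ler_norm (dotv a z0 - b); lra.
  have : b <= dotv a (z0 + l *: z).
    apply/sb/allP => c cs; rewrite dotvDr dotvZr.
    have := z0s c cs; have := cone c cs; rewrite tau0 mulr0; nra.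
  rewrite dotvDr dotvZr; move: cut; rewrite tau0 mulr0 add0r.
  nra.
have {}tau_gt0 : 0 < tau by rewrite lt_neqAle eq_sym tau_gt0.
have : b <= dotv a (tau^-1 *: z).
  apply/sb/allP => c cs; rewrite dotvZr mulrC ler_pdivlMr //.
  exact: cone.
by rewrite dotvZr mulrC ler_pdivlMr //; lra.
Qed.

(* [nu] is the total weight given to the constraint [1 <= b tau - a^T z]. *)
Lemma implied_homog N (s : seq (lineq N)) a b A B :
  implied (homog s a b) A B ->
  exists nu e, [/\ 0 <= nu, implied s (dsubmx A + nu *: a) e,
                   nu * b - e <= vhead A & B <= nu].
Proof.
elim=> {A B} [A B | B B_le0 | A1 B1 A2 B2 _ IH1 _ IH2 | l A B l0 _ IH | A B B' B'B _ IH].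
- rewrite !inE => /or3P[/eqP[-> ->] | /eqP[-> ->] | /mapP[c cs [-> ->]]].
  + exists 0, 0; rewrite dsubmx_vcons vhead_vcons scale0r addr0.
    by split; [| exact: implied0 | lra |].
  + exists 1, 0; rewrite dsubmx_vcons vhead_vcons scale1r addNr.
    by split; [| exact: implied0 | lra |].
  + exists 0, c.2; rewrite dsubmx_vcons vhead_vcons scale0r addr0.
    by split; [| apply: implied_mem; rewrite -surjective_pairing | lra |].
- exists 0, 0; rewrite linear0 scale0r addr0 /vhead !mxE.
  by split; [| exact: implied0 | lra | lra].
- have [nu1 [e1 [nu1_ge0 d1 le1 B1_le]]] := IH1.
  have [nu2 [e2 [nu2_ge0 d2 le2 B2_le]]] := IH2.
  exists (nu1 + nu2), (e1 + e2); rewrite vheadD; split; [exact: addr_ge0 | | lra | lra].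
  have := impliedD d1 d2; rewrite linearD /= scalerDl.
  by congr implied; rewrite !addrA (addrAC (dsubmx A1)).
- have [nu [e [nu_ge0 d le B_le]]] := IH.
  exists (l * nu), (l * e); rewrite vheadZ; split; [exact: mulr_ge0 | | nra | nra].
  by have := impliedZ l0 d; rewrite linearZ /= scalerDr scalerA.
- have [nu [e [nu_ge0 d le B_le]]] := IH.
  by exists nu, e; split => //; lra.
Qed.

Lemma farkas N (s : seq (lineq N)) a b :
  (exists z, solves s z) -> (forall z, solves s z -> b <= dotv a z) ->
  implied s a b.
Proof.
move=> feas sb; have [beta beta_gt0] := farkas_infeasible (homog_infeasible feas sb).
move=> /implied_homog[nu [e [_ d le beta_le]]].
have nu_gt0 : 0 < nu := lt_le_trans beta_gt0 beta_le.
rewrite linear0 add0r /vhead !mxE in d le.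
have nu_inv_ge0 : 0 <= nu^-1 by rewrite invr_ge0 ltW.
have := impliedZ nu_inv_ge0 d.
rewrite scalerA mulVf ?gt_eqF // scale1r; apply: implied_weaken.
by rewrite ler_pdivlMl //; lra.
Qed.

End LinearInequalities.

Section LinearSystems.
Variable R : realType.

Definition ineqs k N (A : 'M[R]_(k, N)) (g : 'cV[R]_k) : seq (lineq R N) :=
  [seq (- (row i A)^T, - g i 0) | i <- enum 'I_k].

Definition eqs k N (A : 'M[R]_(k, N)) (g : 'cV[R]_k) : seq (lineq R N) :=
  ineqs A g ++ ineqs (- A) (- g).

Definition lineq_prod n m (s1 : seq (lineq R n)) (s2 : seq (lineq R m))
  : seq (lineq R (n + m)) :=
  [seq (col_mx c.1 0, c.2) | c <- s1] ++ [seq (col_mx 0 c.1, c.2) | c <- s2].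

Lemma solves_cat N (s1 s2 : seq (lineq R N)) z :
  solves (s1 ++ s2) z = solves s1 z && solves s2 z.
Proof. exact: all_cat. Qed.

Lemma solves_ineqs k N (A : 'M[R]_(k, N)) g z :
  solves (ineqs A g) z = [forall i, (A *m z) i 0 <= g i 0].
Proof.
rewrite /solves all_map; apply/allP/forallP => [sol i | sol i _] /=.
  by have := sol i (mem_enum _ i); rewrite /= dotvNl dotv_row lerN2.
by rewrite dotvNl dotv_row lerN2.
Qed.

Lemma solves_eqs k N (A : 'M[R]_(k, N)) g z : solves (eqs A g) z = (A *m z == g).
Proof.
rewrite solves_cat !solves_ineqs.
apply/andP/eqP => [[/forallP le /forallP ge] | Az].
  apply/matrixP => i j; rewrite [j]ord1; apply/le_anti; rewrite le.
  by have := ge i; rewrite mulNmx !mxE lerN2.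
by split; apply/forallP => i; rewrite ?mulNmx Az.
Qed.

Lemma solves_prod n m (s1 : seq (lineq R n)) (s2 : seq (lineq R m)) x y :
  solves (lineq_prod s1 s2) (col_mx x y) = solves s1 x && solves s2 y.
Proof.
rewrite solves_cat /solves !all_map; congr andb; apply: eq_all => c /=;
  by rewrite dotv_col_mx dotv0l ?addr0 ?add0r.
Qed.

Lemma mem_ineqs k N (A : 'M[R]_(k, N)) g a b :
  (a, b) \in ineqs A g -> exists i, a = - (row i A)^T /\ b = - g i 0.
Proof. by case/mapP => i _ [-> ->]; exists i. Qed.

Lemma implied_eqs k N (s : seq (lineq R N)) (A : 'M[R]_(k, N)) g a b :
  implied (s ++ eqs A g) a b ->
  exists u, forall z, solves s z -> b <= dotv a z + dotv u (A *m z - g).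
Proof.
elim=> {a b} [a b | b b_le0 | a1 b1 a2 b2 _ [u1 IH1] _ [u2 IH2]
             | l a b l0 _ [u IH] | a b b' b'b _ [u IH]].
- rewrite !mem_cat => /or3P[ab_s | /mem_ineqs[i [-> ->]] | /mem_ineqs[i [-> ->]]].
  + by exists 0 => z /allP/(_ _ ab_s); rewrite dotv0l addr0.
  + exists (delta_mx i 0) => z _.
    by rewrite dotvNl dotv_row dotv_delta !mxE; lra.
  + exists (- delta_mx i 0) => z _.
    by rewrite !dotvNl dotv_row dotv_delta mulNmx !mxE; lra.
- by exists 0 => z _; rewrite !dotv0l addr0.
- exists (u1 + u2) => z sz; rewrite !dotvDl.
  by have := IH1 z sz; have := IH2 z sz; lra.
- exists (l *: u) => z sz; rewrite !dotvZl -mulrDr.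
  by apply: ler_wpM2l => //; apply: IH.
- by exists u => z sz; apply: le_trans b'b (IH z sz).
Qed.

Lemma lagrangian_relaxation k N (s : seq (lineq R N)) (A : 'M[R]_(k, N)) g a b :
  (exists2 z, solves s z & A *m z = g) ->
  (forall z, solves s z -> A *m z = g -> b <= dotv a z) ->
  exists u, forall z, solves s z -> b <= dotv a z + dotv u (A *m z - g).
Proof.
move=> [z0 z0s z0g] sb; apply: implied_eqs; apply: farkas.
  by exists z0; rewrite solves_cat solves_eqs z0s z0g eqxx.
by move=> z; rewrite solves_cat solves_eqs => /andP[sz /eqP]; apply: sb.
Qed.

Lemma polyhedronE k N (A : 'M[rat]_(k, N)) (g : 'cV[rat]_k) x :
  polyhedron A g x <-> solves (ineqs (map_mx ratr A) (map_mx ratr g)) x.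
Proof.
rewrite solves_ineqs; split => [Ax | /forallP Ax i].
  by apply/forallP => i; rewrite [X in _ <= X]mxE; apply: Ax.
by have := Ax i; rewrite [X in _ <= X]mxE.
Qed.

End LinearSystems.

Local Open Scope classical_set_scope.

Section SupportFunction.
Variable R : realType.

Lemma supp_le k (S : set 'cV[R]_k) u x : S x -> (supp S u <= (dotv u x)%:E)%E.
Proof. by move=> Sx; apply: ereal_inf_lbound; exists x. Qed.

Lemma supp_ge k (S : set 'cV[R]_k) u K :
  (forall x, S x -> K <= dotv u x) -> (K%:E <= supp S u)%E.
Proof. by move=> K_le; apply/ereal_infP => _ [x Sx <-]; rewrite lee_fin K_le. Qed.

Lemma supp_Ny_or_fin k (S : set 'cV[R]_k) u :
  S !=set0 -> supp S u = -oo%E \/ exists r, supp S u = r%:E.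
Proof.
move=> [x Sx]; move: (supp S u) (supp_le u Sx) => [r | | _] //; last by left.
by right; exists r.
Qed.

Lemma supp_add_ge k l (S1 : set 'cV[R]_k) (S2 : set 'cV[R]_l) u1 u2 K :
  S1 !=set0 -> S2 !=set0 ->
  (forall x y, S1 x -> S2 y -> K <= dotv u1 x + dotv u2 y) ->
  (K%:E <= supp S1 u1 + supp S2 u2)%E.
Proof.
move=> S1_ne [y0 S2y0] K_le.
have S1_ge y : S2 y -> ((K - dotv u2 y)%:E <= supp S1 u1)%E.
  by move=> S2y; apply: supp_ge => x S1x; have := K_le x y S1x S2y; lra.
have [S1_Ny | [r1 S1_r1]] := supp_Ny_or_fin u1 S1_ne.
  by have := S1_ge y0 S2y0; rewrite S1_Ny.
rewrite S1_r1 -leeBlDl // -EFinB; apply: supp_ge => y S2y.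
by have := S1_ge y S2y; rewrite S1_r1 lee_fin; lra.
Qed.

End SupportFunction.

Section DualBound.
Variables (R : realType) (n m p : nat).
Variables (X : set 'cV[R]_n) (Y : set 'cV[R]_m).
Variables (T : 'M[R]_(p, n)) (Q : 'M[R]_(p, m)) (h : 'cV[R]_p) (d : 'cV[R]_m).
Variables (rho : 'cV[R]_n) (rho0 : R).
Hypothesis rho0_ge0 : 0 <= rho0.

Local Notation dualobj := (dualobj X Y T Q h d rho rho0).

Lemma epi_fiber w t : epi Y Q d (w, t) -> exists2 y, Y y & Q *m y = w.
Proof.
have [//|no_y] := pselect (exists2 y, Y y & Q *m y = w); rewrite /epi /= /fval.
suff -> : [set (dotv d y)%:E | y in [set y | Y y /\ Q *m y = w]] = set0.
  by rewrite ereal_inf0.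
by apply/seteqP; split => // x [y [Yy Qy] _]; apply: no_y; exists y.
Qed.

Lemma epi_ge w t K : epi Y Q d (w, t) ->
  (forall y, Y y -> Q *m y = w -> K <= rho0 * dotv d y) -> K <= rho0 * t.
Proof.
move=> epi_wt K_le; have [y Yy Qy] := epi_fiber epi_wt.
have [rho0_0|rho0_ne0] := eqVneq rho0 0.
  by have := K_le y Yy Qy; rewrite rho0_0 !mul0r.
have rho0_gt0 : 0 < rho0 by rewrite lt_neqAle eq_sym rho0_ne0.
have : ((rho0^-1 * K)%:E <= fval Y Q d w)%E.
  apply/ereal_infP => _ [y' [Yy' Qy'] <-]; rewrite lee_fin ler_pdivrMl //.
  exact: K_le.
by move/le_trans/(_ epi_wt); rewrite lee_fin ler_pdivrMl.
Qed.

Lemma supp_le_supp_epi a :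
  (supp Y (Q^T *m a + rho0 *: d) <= supp2 (epi Y Q d) a rho0)%E.
Proof.
apply/ereal_infP => _ [[w t] epi_wt <-] /=.
have [y Yy _] := epi_fiber epi_wt.
have [->|[r supp_r]] := supp_Ny_or_fin (Q^T *m a + rho0 *: d) (ex_intro _ y Yy).
  exact: leNye.
rewrite supp_r lee_fin -lerBlDl; apply: epi_ge epi_wt _ => y' Yy' Qy'.
have := supp_le (Q^T *m a + rho0 *: d) Yy'.
by rewrite supp_r lee_fin dotvDl -dotv_mulmx dotvZl Qy'; lra.
Qed.

Lemma dualobj_le_cut a x t : X x ->
  (supp2 (epi Y Q d) a rho0 <= (dotv a (h - T *m x) + rho0 * t)%:E)%E ->
  (dualobj a <= (dotv rho x + rho0 * t)%:E)%E.
Proof.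
move=> Xx cut; rewrite /dualobj.
apply: le_trans (leeD (leeD (lexx _) (supp_le _ Xx)) (supp_le_supp_epi a)) _.
apply: le_trans (leeD (lexx _) cut) _.
rewrite -!EFinD lee_fin dotvDl -dotv_mulmx dotvDr dotvNr; lra.
Qed.

Lemma weak_duality a : (dualobj a <= supp2 (feasF X Y T Q h d) rho rho0)%E.
Proof.
apply/ereal_infP => _ [[x t] [/= Xx epi_xt] <-] /=.
by apply: dualobj_le_cut Xx _; apply: ereal_inf_lbound; exists (h - T *m x, t).
Qed.

End DualBound.

Section StrongDuality.
Variables (R : realType) (n m p kX kY : nat).
Variables (AX : 'M[rat]_(kX, n)) (bX : 'cV[rat]_kX).
Variables (AY : 'M[rat]_(kY, m)) (bY : 'cV[rat]_kY).
Variables (T : 'M[R]_(p, n)) (Q : 'M[R]_(p, m)) (h : 'cV[R]_p) (d : 'cV[R]_m).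
Variables (rho : 'cV[R]_n) (rho0 : R).

Local Notation X := (@polyhedron R _ _ AX bX).
Local Notation Y := (@polyhedron R _ _ AY bY).
Local Notation F := (feasF X Y T Q h d).

Let sXY := lineq_prod (ineqs (map_mx (@ratr R) AX) (map_mx (@ratr R) bX))
                      (ineqs (map_mx (@ratr R) AY) (map_mx (@ratr R) bY)).

Lemma solves_polyhedra x y : solves sXY (col_mx x y) <-> X x /\ Y y.
Proof. by rewrite solves_prod !polyhedronE; split => [/andP[]|[-> ->]]. Qed.

Lemma exists_dualobj_ge v : supp2 F rho rho0 = v%:E ->
  exists a, (v%:E <= dualobj X Y T Q h d rho rho0 a)%E.
Proof.
move=> Fv.
have [[x0 t0] [/= Xx0 epi0]] : F !=set0.
  by apply/set0P/negP => /eqP F0; move: Fv; rewrite /supp2 F0 image_set0 ereal_inf0.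
have [y0 Yy0 Qy0] := epi_fiber epi0.
have [||a a_ok] :=
  @lagrangian_relaxation R _ _ sXY (row_mx T Q) h (col_mx rho (rho0 *: d)) v.
- exists (col_mx x0 y0); first exact/solves_polyhedra.
  by rewrite mul_row_col Qy0 addrC subrK.
- move=> z; rewrite -[z]vsubmxK mul_row_col dotv_col_mx dotvZl.
  move=> /solves_polyhedra[Xx Yy] xy_h; rewrite -lee_fin -Fv.
  apply: ereal_inf_lbound; exists (usubmx z, dotv d (dsubmx z)) => //.
  split => //=; apply: ereal_inf_lbound; exists (dsubmx z) => //.
  by split => //; rewrite -xy_h addrAC subrr add0r.
exists a; rewrite /dualobj -addeA -[v](addKr (dotv a h)) EFinD.
apply: leeD2l; apply: supp_add_ge; [by exists x0 | by exists y0 | move=> x y Xx Yy].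
have sxy : solves sXY (col_mx x y) by apply/solves_polyhedra.
have := a_ok _ sxy; rewrite mul_row_col dotv_col_mx.
rewrite !dotvDl !dotvDr dotvNr -!dotv_mulmx; lra.
Qed.

End StrongDuality.

Theorem mainTheorem3 (R : realType) (n m p kX kY : nat)
  (AX : 'M[rat]_(kX, n)) (bX : 'cV[rat]_kX)
  (AY : 'M[rat]_(kY, m)) (bY : 'cV[rat]_kY)
  (T : 'M[R]_(p, n)) (Q : 'M[R]_(p, m)) (h : 'cV[R]_p)
  (c : 'cV[R]_n) (d : 'cV[R]_m) (rho : 'cV[R]_n) (rho0 : R) :
  let X := @polyhedron R _ _ AX bX in
  let Y := @polyhedron R _ _ AY bY in
  X !=set0 -> Y !=set0 -> pointed Y ->
  0 <= rho0 ->
  supp2 (feasF X Y T Q h d) rho rho0 \is a fin_num ->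
  (exists a_opt : 'cV[R]_p,
      (forall a : 'cV[R]_p,
         (dualobj X Y T Q h d rho rho0 a <= dualobj X Y T Q h d rho rho0 a_opt)%E)
      /\ dualobj X Y T Q h d rho rho0 a_opt = supp2 (feasF X Y T Q h d) rho rho0)
  /\
  (forall ahat : 'cV[R]_p,
      (forall a : 'cV[R]_p,
         (dualobj X Y T Q h d rho rho0 a <= dualobj X Y T Q h d rho rho0 ahat)%E) ->
      forall (x : 'cV[R]_n) (theta : R), X x ->
        (supp2 (epi Y Q d) ahat rho0 <= (dotv ahat (h - T *m x) + rho0 * theta)%:E)%E ->
        (supp2 (feasF X Y T Q h d) rho rho0 <= (dotv rho x + rho0 * theta)%:E)%E).
Proof.
move=> X Y _ _ _ rho0_ge0 F_fin.
have [a a_ge] := exists_dualobj_ge (esym (fineK F_fin)).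
have a_opt : dualobj X Y T Q h d rho rho0 a = supp2 (feasF X Y T Q h d) rho rho0.
  by apply/le_anti/andP; split; [exact: weak_duality | rewrite -(fineK F_fin)].
split=> [|ahat ahat_opt x t Xx cut].
  by exists a; split => // a'; rewrite a_opt weak_duality.
by rewrite -a_opt; apply: le_trans (ahat_opt a) (dualobj_le_cut rho rho0_ge0 Xx cut).
Qed.
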